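(* Let $I=[-1,1]$ be a parametrised interval object in a category $\mathcal{C}$ with finite products, with negation $-\colon I\to I$ (the unique midpoint endomorphism with $-(1)=-1$, $-(-1)=1$) and $0=-1\oplus 1$. Then there is a unique map $(x,y)\mapsto x\cdot y\colon I\times I\to I$ such that $x\cdot(-1)=-x$, $x\cdot 1=x$ and $x\cdot(y\oplus z)=(x\cdot y)\oplus(x\cdot z)$. Moreover, this map satisfies $x\cdot 0=0$, $x\cdot y=y\cdot x$ and $(x\cdot y)\cdot z=x\cdot(y\cdot z)$.
   Context: Equations are between generalised elements. A midpoint object is $(A,m)$ with $m\colon A\times A\to A$ satisfying $m(x,x)=x$, $m(x,y)=m(y,x)$, $m(m(x,y),m(z,w))=m(m(x,z),m(y,w))$; cancellative if $m(x,y)=m(x,z)$ implies $y=z$; iterative if for every $c\colon X\to A\times X$ there is a unique $u\colon X\to A$ with $m\circ(\mathrm{id}\times u)\circ c=u$. An m-convex body is a cancellative iterative midpoint object. A parametrised interval object is an m-convex body $(I,\oplus)$ with global points $a,b$ (here $-1,1$) such that for every object $P$, every m-convex body $(A,m)$ and maps $x_a,x_b\colon P\to A$ there is a unique map $h\colon P\times I\to A$ with $h(p,a)=x_a(p)$, $h(p,b)=x_b(p)$ and $h(p,x\oplus y)=m(h(p,x),h(p,y))$. *)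

(* Equations are stated between
   generalised elements (morphisms X -> A for arbitrary X). *)

Set Implicit Arguments.
Unset Strict Implicit.

Record FPCat := {
  Ob : Type;
  Hom : Ob -> Ob -> Type;
  cid : forall A, Hom A A;
  comp : forall A B C, Hom B C -> Hom A B -> Hom A C;
  comp_id_l : forall A B (f : Hom A B), comp (cid B) f = f;
  comp_id_r : forall A B (f : Hom A B), comp f (cid A) = f;
  comp_assoc : forall A B C D (h : Hom C D) (g : Hom B C) (f : Hom A B),
      comp h (comp g f) = comp (comp h g) f;
  one : Ob;
  bang : forall A, Hom A one;
  bang_unique : forall A (f : Hom A one), f = bang A;
  prd : Ob -> Ob -> Ob;
  p1 : forall A B, Hom (prd A B) A;
  p2 : forall A B, Hom (prd A B) B;
  pair : forall X A B, Hom X A -> Hom X B -> Hom X (prd A B);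
  pair_p1 : forall X A B (f : Hom X A) (g : Hom X B), comp (p1 A B) (pair f g) = f;
  pair_p2 : forall X A B (f : Hom X A) (g : Hom X B), comp (p2 A B) (pair f g) = g;
  pair_unique : forall X A B (h : Hom X (prd A B)),
      h = pair (comp (p1 A B) h) (comp (p2 A B) h)
}.

Arguments Hom f _ _ : clear implicits, rename.
Arguments cid {f} A : rename.
Arguments comp {f A B C} _ _ : rename.
Arguments one {f} : rename.
Arguments bang {f} A : rename.
Arguments prd {f} _ _ : rename.
Arguments p1 {f} A B : rename.
Arguments p2 {f} A B : rename.
Arguments pair {f X A B} _ _ : rename.

Section Defs.
Variable C : FPCat.

Definition app2 {X A B D : Ob C} (m : Hom C (prd A B) D) (x : Hom C X A) (y : Hom C X B)
  : Hom C X D := comp m (pair x y).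

Definition cst {X A : Ob C} (a : Hom C one A) : Hom C X A := comp a (bang X).

Definition is_midpoint (A : Ob C) (m : Hom C (prd A A) A) : Prop :=
  (forall X (x : Hom C X A), app2 m x x = x) /\
  (forall X (x y : Hom C X A), app2 m x y = app2 m y x) /\
  (forall X (x y z w : Hom C X A),
      app2 m (app2 m x y) (app2 m z w) = app2 m (app2 m x z) (app2 m y w)).

Definition is_cancellative (A : Ob C) (m : Hom C (prd A A) A) : Prop :=
  forall X (x y z : Hom C X A), app2 m x y = app2 m x z -> y = z.

(* id x u : A x X -> A x A *)
Definition is_iterative (A : Ob C) (m : Hom C (prd A A) A) : Prop :=
  forall X (c : Hom C X (prd A X)),
    exists! u : Hom C X A,
      comp m (comp (pair (p1 A X) (comp u (p2 A X))) c) = u.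

Definition is_mconvex (A : Ob C) (m : Hom C (prd A A) A) : Prop :=
  is_midpoint m /\ is_cancellative m /\ is_iterative m.

Definition is_midpoint_hom {A B : Ob C} (mA : Hom C (prd A A) A) (mB : Hom C (prd B B) B)
  (f : Hom C A B) : Prop :=
  forall X (x y : Hom C X A), comp f (app2 mA x y) = app2 mB (comp f x) (comp f y).

Definition is_param_interval (I : Ob C) (oplus : Hom C (prd I I) I)
  (a b : Hom C one I) : Prop :=
  is_mconvex oplus /\
  forall (P A : Ob C) (m : Hom C (prd A A) A), is_mconvex m ->
  forall (xa xb : Hom C P A),
    exists! h : Hom C (prd P I) A,
      (forall X (p : Hom C X P), app2 h p (cst a) = comp xa p) /\
      (forall X (p : Hom C X P), app2 h p (cst b) = comp xb p) /\
      (forall X (p : Hom C X P) (x y : Hom C X I),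
          app2 h p (app2 oplus x y) = app2 m (app2 h p x) (app2 h p y)).

Definition is_mult (I : Ob C) (oplus : Hom C (prd I I) I) (a b : Hom C one I)
  (neg : Hom C I I) (mul : Hom C (prd I I) I) : Prop :=
  (forall X (x : Hom C X I), app2 mul x (cst a) = comp neg x) /\
  (forall X (x : Hom C X I), app2 mul x (cst b) = x) /\
  (forall X (x y z : Hom C X I),
      app2 mul x (app2 oplus y z) = app2 oplus (app2 mul x y) (app2 mul x z)).

End Defs.

(* Every law to be proved is an equation between two maps P x I -> I that are
   midpoint homomorphisms in the last variable, and by the uniqueness clause of
   the universal property of I two such maps agree once they agree at -1 and 1.
   Multiplication itself is the map that property provides for x |-> -x at -1
   and x |-> x at 1.  The endpoint checks need the laws in a fixed order:
   (-1) y = -y (by uniqueness of negation), 1 y = y, left distributivity,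
   - - x = x and x (-y) = -(x y); then x 0 = x (-1 (+) 1) = -x (+) x = 0, and
   commutativity and associativity follow. *)


Set Implicit Arguments.
Unset Strict Implicit.

Section FiniteProducts.
Context {C : FPCat}.

Lemma comp_assocR (A B D E : Ob C) (h : Hom C D E) (g : Hom C B D) (f : Hom C A B) :
  comp (comp h g) f = comp h (comp g f).
Proof. symmetry; apply comp_assoc. Qed.

Lemma comp_pair (X Y A B : Ob C) (f : Hom C Y A) (g : Hom C Y B) (h : Hom C X Y) :
  comp (pair f g) h = pair (comp f h) (comp g h).
Proof.
  rewrite (pair_unique (comp (pair f g) h)), !comp_assoc, pair_p1, pair_p2; reflexivity.
Qed.

Lemma app2_comp (X Y A B D : Ob C) (m : Hom C (prd A B) D) (x : Hom C Y A) (y : Hom C Y B)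
  (h : Hom C X Y) : comp (app2 m x y) h = app2 m (comp x h) (comp y h).
Proof. unfold app2; rewrite comp_assocR, comp_pair; reflexivity. Qed.

Lemma app2_compl (X A B D E : Ob C) (f : Hom C D E) (m : Hom C (prd A B) D)
  (x : Hom C X A) (y : Hom C X B) : app2 (comp f m) x y = comp f (app2 m x y).
Proof. apply comp_assocR. Qed.

Lemma app2_app2 (X A B D E F : Ob C) (m : Hom C (prd A B) D) (x : Hom C (prd E F) A)
  (y : Hom C (prd E F) B) (p : Hom C X E) (q : Hom C X F) :
  app2 (app2 m x y) p q = app2 m (app2 x p q) (app2 y p q).
Proof. unfold app2 at 1; rewrite app2_comp; reflexivity. Qed.

Lemma app2_p1 (X A B : Ob C) (x : Hom C X A) (y : Hom C X B) : app2 (p1 A B) x y = x.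
Proof. apply pair_p1. Qed.

Lemma app2_p2 (X A B : Ob C) (x : Hom C X A) (y : Hom C X B) : app2 (p2 A B) x y = y.
Proof. apply pair_p2. Qed.

Lemma cst_comp (X Y A : Ob C) (a : Hom C one A) (h : Hom C X Y) : comp (cst a) h = cst a.
Proof. unfold cst; rewrite comp_assocR, (bang_unique (comp (bang Y) h)); reflexivity. Qed.

Lemma comp_cst (X A B : Ob C) (f : Hom C A B) (a : Hom C one A) :
  comp f (@cst C X A a) = cst (comp f a).
Proof. unfold cst; apply comp_assoc. Qed.

Lemma cst_app2 (X A B D : Ob C) (m : Hom C (prd A B) D) (a : Hom C one A) (b : Hom C one B) :
  @cst C X D (app2 m a b) = app2 m (cst a) (cst b).
Proof. unfold cst, app2; rewrite comp_assocR, comp_pair; reflexivity. Qed.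

Lemma cst_one (A : Ob C) (a : Hom C one A) : @cst C one A a = a.
Proof. unfold cst; rewrite <- (bang_unique (cid one)), comp_id_r; reflexivity. Qed.

Lemma comp_global (A B : Ob C) (f : Hom C A B) (a : Hom C one A) : comp f a = comp f (cst a).
Proof. rewrite cst_one; reflexivity. Qed.

End FiniteProducts.

(* Keeps [rewrite] from seeing [app2 m x y] as the [comp] redex it unfolds to. *)
Opaque app2 cst.
Hint Rewrite @comp_assocR @app2_comp @app2_compl @app2_app2 @app2_p1 @app2_p2 @cst_comp
  pair_p1 pair_p2 comp_id_l comp_id_r : fp.

(* Laws are proved for the generic elements (the projections) and then transferred
   to arbitrary generalised elements by precomposition. *)
Ltac specialize_map E t :=
  apply (f_equal (fun h => comp h t)) in E; autorewrite with fp in E.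

Section MidpointLaws.
Context {C : FPCat} {A : Ob C} {m : Hom C (prd A A) A}.
Hypothesis Hm : is_mconvex m.

Lemma midpoint_idem X (x : Hom C X A) : app2 m x x = x.
Proof. apply Hm. Qed.

Lemma midpoint_comm X (x y : Hom C X A) : app2 m x y = app2 m y x.
Proof. apply Hm. Qed.

Lemma midpoint_medial X (x y z w : Hom C X A) :
  app2 m (app2 m x y) (app2 m z w) = app2 m (app2 m x z) (app2 m y w).
Proof. apply Hm. Qed.

End MidpointLaws.

Definition is_midpoint_hom_r {C : FPCat} {I P A : Ob C} (oplus : Hom C (prd I I) I)
  (m : Hom C (prd A A) A) (h : Hom C (prd P I) A) : Prop :=
  forall X (p : Hom C X P) (x y : Hom C X I),
    app2 h p (app2 oplus x y) = app2 m (app2 h p x) (app2 h p y).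

Section IntervalUniqueness.
Context {C : FPCat} {I : Ob C} {oplus : Hom C (prd I I) I} {a b : Hom C one I}.
Hypothesis HI : is_param_interval oplus a b.

Lemma interval_map_unique {P A : Ob C} (m : Hom C (prd A A) A) (h1 h2 : Hom C (prd P I) A) :
  is_mconvex m ->
  app2 h1 (cid P) (cst a) = app2 h2 (cid P) (cst a) ->
  app2 h1 (cid P) (cst b) = app2 h2 (cid P) (cst b) ->
  is_midpoint_hom_r oplus m h1 -> is_midpoint_hom_r oplus m h2 -> h1 = h2.
Proof.
  intros Hm Ea Eb H1 H2.
  destruct (proj2 HI P A m Hm (app2 h1 (cid P) (cst a)) (app2 h1 (cid P) (cst b)))
    as [h [_ Huniq]].
  assert (Hh : forall h', app2 h' (cid P) (cst a) = app2 h1 (cid P) (cst a) ->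
                 app2 h' (cid P) (cst b) = app2 h1 (cid P) (cst b) ->
                 is_midpoint_hom_r oplus m h' -> h = h').
  { intros h' Ha Hb Hh'; apply Huniq; split; [|split]; auto; intros X p.
    - rewrite <- Ha; autorewrite with fp; reflexivity.
    - rewrite <- Hb; autorewrite with fp; reflexivity. }
  rewrite <- (Hh h1), <- (Hh h2); auto.
Qed.

Lemma interval_endo_unique (f g : Hom C I I) :
  is_midpoint_hom oplus oplus f -> is_midpoint_hom oplus oplus g ->
  comp f a = comp g a -> comp f b = comp g b -> f = g.
Proof.
  intros Hf Hg Ea Eb.
  assert (E : comp f (p2 one I) = comp g (p2 one I)).
  { apply (interval_map_unique (proj1 HI));
      try (intros X p x y; autorewrite with fp; apply Hf || apply Hg);
      autorewrite with fp; rewrite <- !comp_global; assumption. }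
  specialize_map E (pair (bang I) (cid I)); exact E.
Qed.

End IntervalUniqueness.

Ltac interval_calc := autorewrite with fp interval; try reflexivity.

Section Multiplication.
Context {C : FPCat} {I : Ob C} {oplus : Hom C (prd I I) I} {a b : Hom C one I}.
Hypothesis HI : is_param_interval oplus a b.
Context {neg : Hom C I I}.
Hypothesis Hneg_hom : is_midpoint_hom oplus oplus neg.
Hypotheses (Hneg_a : comp neg a = b) (Hneg_b : comp neg b = a).
Hypothesis Hneg_unique : forall f : Hom C I I,
  is_midpoint_hom oplus oplus f -> comp f a = b -> comp f b = a -> f = neg.

Lemma neg_oplus X (x y : Hom C X I) :
  comp neg (app2 oplus x y) = app2 oplus (comp neg x) (comp neg y).
Proof. apply Hneg_hom. Qed.

Lemma neg_cst_a X : comp neg (@cst C X I a) = cst b.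
Proof. rewrite comp_cst, Hneg_a; reflexivity. Qed.

Lemma neg_cst_b X : comp neg (@cst C X I b) = cst a.
Proof. rewrite comp_cst, Hneg_b; reflexivity. Qed.

Hint Rewrite neg_oplus Hneg_a Hneg_b neg_cst_a neg_cst_b : interval.

Lemma negK X (x : Hom C X I) : comp neg (comp neg x) = x.
Proof.
  assert (E : comp neg neg = cid I).
  { apply (interval_endo_unique HI); try intros X' y z; interval_calc. }
  specialize_map E x; exact E.
Qed.

Lemma oplus_negl X (x : Hom C X I) : app2 oplus (comp neg x) x = cst (app2 oplus a b).
Proof.
  assert (E : app2 oplus neg (cid I) = cst (app2 oplus a b)).
  { apply (interval_endo_unique HI); try intros X' y z; interval_calc.
    - apply (midpoint_medial (proj1 HI)).
    - symmetry; apply (midpoint_idem (proj1 HI)).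
    - rewrite cst_one; apply (midpoint_comm (proj1 HI)).
    - rewrite cst_one; reflexivity. }
  specialize_map E x; exact E.
Qed.

Hint Rewrite negK : interval.

Lemma is_mult_exists : exists mul, is_mult oplus a b neg mul.
Proof.
  destruct (proj2 HI I I oplus (proj1 HI) neg (cid I)) as [mul [[Ha [Hb Hhom]] _]].
  exists mul; split; [|split]; intros X x; auto.
  rewrite Hb; apply comp_id_l.
Qed.

Lemma is_mult_unique (mul1 mul2 : Hom C (prd I I) I) :
  is_mult oplus a b neg mul1 -> is_mult oplus a b neg mul2 -> mul1 = mul2.
Proof.
  intros [Ha1 [Hb1 Hhom1]] [Ha2 [Hb2 Hhom2]].
  apply (interval_map_unique HI (proj1 HI)); try intros X p x y;
    rewrite ?Ha1, ?Ha2, ?Hb1, ?Hb2; auto.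
Qed.

Variable mul : Hom C (prd I I) I.
Hypothesis Hmul : is_mult oplus a b neg mul.

Lemma mulrN1 X (x : Hom C X I) : app2 mul x (cst a) = comp neg x.
Proof. apply Hmul. Qed.

Lemma mulr1 X (x : Hom C X I) : app2 mul x (cst b) = x.
Proof. apply Hmul. Qed.

Lemma mulr_oplus X (x y z : Hom C X I) :
  app2 mul x (app2 oplus y z) = app2 oplus (app2 mul x y) (app2 mul x z).
Proof. apply Hmul. Qed.

Hint Rewrite mulrN1 mulr1 mulr_oplus : interval.

Lemma mulN1r X (y : Hom C X I) : app2 mul (cst a) y = comp neg y.
Proof.
  assert (E : app2 mul (cst a) (cid I) = neg).
  { apply Hneg_unique; try intros X' y' z;
      rewrite ?(comp_global _ a), ?(comp_global _ b); interval_calc;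
      apply cst_one. }
  specialize_map E y; exact E.
Qed.

Lemma mul1r X (y : Hom C X I) : app2 mul (cst b) y = y.
Proof.
  assert (E : app2 mul (cst b) (cid I) = cid I).
  { apply (interval_endo_unique HI); try intros X' y' z;
      rewrite ?(comp_global _ a), ?(comp_global _ b); interval_calc. }
  specialize_map E y; exact E.
Qed.

Hint Rewrite mulN1r mul1r : interval.

Local Notation u := (comp (p1 I I) (p1 (prd I I) I)).
Local Notation v := (comp (p2 I I) (p1 (prd I I) I)).
Local Notation w := (p2 (prd I I) I).

Lemma mul_oplusl X (x y z : Hom C X I) :
  app2 mul (app2 oplus x y) z = app2 oplus (app2 mul x z) (app2 mul y z).
Proof.
  assert (E : app2 mul (app2 oplus u v) w = app2 oplus (app2 mul u w) (app2 mul v w)).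
  { apply (interval_map_unique HI (proj1 HI)); try intros X' p s t;
      interval_calc.
    apply (midpoint_medial (proj1 HI)). }
  specialize_map E (pair (pair x y) z); exact E.
Qed.

Lemma mulrN X (x y : Hom C X I) : app2 mul x (comp neg y) = comp neg (app2 mul x y).
Proof.
  assert (E : app2 mul (p1 I I) (comp neg (p2 I I)) = comp neg (app2 mul (p1 I I) (p2 I I))).
  { apply (interval_map_unique HI (proj1 HI)); try intros X' p s t; interval_calc. }
  specialize_map E (pair x y); exact E.
Qed.

Hint Rewrite mul_oplusl mulrN : interval.

Lemma mulr0 X (x : Hom C X I) : app2 mul x (cst (app2 oplus a b)) = cst (app2 oplus a b).
Proof.
  transitivity (app2 oplus (comp neg x) x); [|apply oplus_negl].
  rewrite cst_app2, mulr_oplus, mulrN1, mulr1; reflexivity.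
Qed.

Lemma mulrC X (x y : Hom C X I) : app2 mul x y = app2 mul y x.
Proof.
  assert (E : app2 mul (p1 I I) (p2 I I) = app2 mul (p2 I I) (p1 I I)).
  { apply (interval_map_unique HI (proj1 HI)); try intros X' p s t; interval_calc. }
  specialize_map E (pair x y); exact E.
Qed.

Lemma mulrA X (x y z : Hom C X I) :
  app2 mul (app2 mul x y) z = app2 mul x (app2 mul y z).
Proof.
  assert (E : app2 mul (app2 mul u v) w = app2 mul u (app2 mul v w)).
  { apply (interval_map_unique HI (proj1 HI)); try intros X' p s t;
      interval_calc. }
  specialize_map E (pair (pair x y) z); exact E.
Qed.

End Multiplication.

Theorem mainTheorem4 (C : FPCat) (I : Ob C) (oplus : Hom C (prd I I) I)
  (a b : Hom C one I) (* a = -1, b = 1 *)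
  (HI : is_param_interval oplus a b)
  (neg : Hom C I I)
  (Hneg_hom : is_midpoint_hom oplus oplus neg)
  (Hneg_a : comp neg a = b) (Hneg_b : comp neg b = a)
  (Hneg_unique : forall f : Hom C I I,
      is_midpoint_hom oplus oplus f -> comp f a = b -> comp f b = a -> f = neg) :
  let zero := app2 oplus a b in
  exists mul : Hom C (prd I I) I,
    is_mult oplus a b neg mul /\
    (forall mul', is_mult oplus a b neg mul' -> mul' = mul) /\
    (forall X (x : Hom C X I), app2 mul x (cst zero) = cst zero) /\
    (forall X (x y : Hom C X I), app2 mul x y = app2 mul y x) /\
    (forall X (x y z : Hom C X I),
        app2 mul (app2 mul x y) z = app2 mul x (app2 mul y z)).
Proof.
  intros zero.
  destruct (is_mult_exists (neg := neg) HI) as [mul Hmul].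
  exists mul; split; [exact Hmul|].
  split; [intros mul' Hmul'; exact (is_mult_unique HI Hmul' Hmul)|].
  split; [intros X x; eapply mulr0; eassumption|].
  split; [intros X x y; eapply mulrC; eassumption|].
  intros X x y z; eapply mulrA; eassumption.
Qed.
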